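(* For every $k\ge 2$, every $k$-partite $k$-graph $F$ belongs to $\mathbf{COVER}_k^{\cdot,k-1}$.
   Context: A $k$-graph $H$ has edge set $E(H)\subseteq\binom{V(H)}{k}$; $\delta_{k-1}(H)$ is the minimum over $(k-1)$-subsets $S$ of the number of edges containing $S$. A $k$-graph $F$ is $k$-partite if $V(F)$ can be partitioned into $k$ classes such that every edge meets each class in exactly one vertex. An $(n,p,\mu,\cdot)$ $k$-graph is a $k$-graph $H$ on a vertex set $V$ with $|V|=n$ such that for all $X_1,\dots,X_k\subseteq V$, the number of $k$-tuples $(x_1,\dots,x_k)\in X_1\times\cdots\times X_k$ with $\{x_1,\dots,x_k\}\in E(H)$ is at least $p|X_1|\cdots|X_k|-\mu n^k$. $\mathbf{COVER}_k^{\cdot,k-1}$ is the class of $k$-graphs $F$ such that for all $0<p,\alpha<1$ there exist $n_0$ and $\mu>0$ such that in every $(n,p,\mu,\cdot)$ $k$-graph $H$ with $\delta_{k-1}(H)\ge\alpha n$ and $n\ge n_0$ every vertex lies in a copy of $F$. *)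

From HB Require Import structures.
From mathcomp Require Import all_boot all_order all_algebra.
From mathcomp Require Import reals.
Set Implicit Arguments. Unset Strict Implicit. Unset Printing Implicit Defensive.
Import Order.TTheory GRing.Theory Num.Theory.
Local Open Scope ring_scope.

Definition is_kgraph (k : nat) (V : finType) (E : {set {set V}}) : Prop :=
  forall e, e \in E -> #|e| = k.

Definition kpartite (k : nat) (V : finType) (E : {set {set V}}) : Prop :=
  exists c : V -> 'I_k,
    (forall i : 'I_k, exists v, c v = i) /\
    (forall e, e \in E -> forall i : 'I_k, #|[set v in e | c v == i]| = 1%N).

Definition codeg_ge (R : realType) (k : nat) (V : finType) (E : {set {set V}})
    (alpha : R) : Prop :=
  forall S : {set V}, #|S| = k.-1 ->
    alpha * (#|V|%:R) <= (#|[set e in E | S \subset e]|)%:R.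

Definition pmu_dense (R : realType) (k : nat) (V : finType) (E : {set {set V}})
    (p mu : R) : Prop :=
  forall X : 'I_k -> {set V},
    p * (\prod_(i < k) (#|X i|%:R : R)) - mu * (#|V|%:R) ^+ k <=
    (#|[set x : {ffun 'I_k -> V} |
         [forall i, x i \in X i] && ([set x i | i : 'I_k] \in E)]|)%:R.

Definition in_copy (W V : finType) (EF : {set {set W}}) (EH : {set {set V}})
    (v : V) : Prop :=
  exists f : W -> V,
    [/\ injective f, (forall e, e \in EF -> f @: e \in EH) & v \in codom f].

Definition in_COVER (R : realType) (k : nat) (W : finType)
    (EF : {set {set W}}) : Prop :=
  forall p alpha : R, 0 < p < 1 -> 0 < alpha < 1 ->
  exists n0 : nat, exists2 mu : R, 0 < mu &
    forall (V : finType) (EH : {set {set V}}),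
      is_kgraph k EH -> pmu_dense k EH p mu -> codeg_ge k EH alpha ->
      (n0 <= #|V|)%N ->
      forall v : V, in_copy EF EH v.

From mathcomp Require Import all_boot all_order all_algebra.
From mathcomp Require Import reals.
From mathcomp Require Import fingroup perm zify ring.
Set Implicit Arguments. Unset Strict Implicit. Unset Printing Implicit Defensive.
Import Order.TTheory GRing.Theory Num.Theory.

(* Write k = l + 2 and |W| = t + 1.  By the codegree condition every (k-1)-tuple of
   distinct vertices extends to an edge in at least alpha n ways, so a vertex v lies
   in Omega(n^(k-1)) ordered edges.  Erdős' iterated power-mean argument then yields
   Omega(n^(k(t+1)-1)) homomorphisms of the complete k-partite k-graph K(t+1,...,t+1)
   whose first part starts with v, while only O(n^(k(t+1)-2)) of them are not
   injective.  So for n large an injective one exists, and F embeds into it class by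
   class, with a vertex of the first class sent to v. *)

Section AllSeqs.
Variable V : finType.

Fixpoint allseqs (m : nat) : seq (seq V) :=
  if m is m'.+1 then [seq x :: s | x <- enum V, s <- allseqs m'] else [:: [::]].

Lemma size_allseqs m : size (allseqs m) = #|V| ^ m.
Proof. by elim: m => [|m IH] //=; rewrite size_allpairs IH -cardE expnS. Qed.

Lemma size_mem_allseqs m s : s \in allseqs m -> size s = m.
Proof.
elim: m s => [|m IH] s /=; first by rewrite inE => /eqP ->.
by case/allpairsP=> -[x s'] /= [_ /IH <- ->].
Qed.

Lemma big_allseqsS m (F : seq V -> nat) :
  \sum_(s <- allseqs m.+1) F s = \sum_x \sum_(s <- allseqs m) F (x :: s).
Proof. by rewrite /= big_allpairs_dep /= big_enum. Qed.

Lemma sum_allseqs_prod m (f : V -> nat) :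
  \sum_(s <- allseqs m) \prod_(x <- s) f x = (\sum_x f x) ^ m.
Proof.
elim: m => [|m IH]; first by rewrite /= big_seq1 big_nil.
rewrite big_allseqsS expnS big_distrl /=; apply: eq_bigr => x _.
by under eq_bigr do rewrite big_cons; rewrite -big_distrr /= IH.
Qed.

End AllSeqs.

Section PowerMean.
Variables (I : Type) (r : seq I) (F : I -> nat).

Lemma leq_expn2r x y q : x <= y -> x ^ q <= y ^ q.
Proof. by move=> le_xy; elim: q => [|q IH] //; rewrite !expnS leq_mul. Qed.

Lemma sum_nat_const_seq c : \sum_(a <- r) c = size r * c.
Proof. by rewrite -sum1_size big_distrl; apply: eq_bigr => a _; rewrite /= mul1n. Qed.

Lemma chebyshev_sum q :
  (\sum_(a <- r) F a) * (\sum_(a <- r) F a ^ q) <= size r * \sum_(a <- r) F a ^ q.+1.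
Proof.
have pair_le x y : x * y ^ q + y * x ^ q <= x * x ^ q + y * y ^ q.
  wlog le_xy : x y / x <= y.
    move=> H; case: (leqP x y) => [/H //|/ltnW/H].
    by rewrite addnC [X in _ <= X]addnC.
  by have := leq_expn2r q le_xy; set X := x ^ q; set Y := y ^ q; nia.
rewrite -(leq_pmul2l (isT : 0 < 2)) !mul2n -!addnn.
have -> : size r * \sum_(a <- r) F a ^ q.+1 + size r * \sum_(a <- r) F a ^ q.+1 =
    \sum_(a <- r) \sum_(b <- r) (F a * F a ^ q + F b * F b ^ q).
  symmetry; under eq_bigr do rewrite big_split /= sum_nat_const_seq.
  rewrite big_split /= -big_distrr /= exchange_big /=.
  under [X in _ + X = _]eq_bigr do rewrite sum_nat_const_seq.
  rewrite -big_distrr /=; congr (_ + _); congr (_ * _);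
  by apply: eq_bigr => a _; rewrite expnS.
have -> : (\sum_(a <- r) F a) * (\sum_(a <- r) F a ^ q) +
          (\sum_(a <- r) F a) * (\sum_(a <- r) F a ^ q) =
    \sum_(a <- r) \sum_(b <- r) (F a * F b ^ q + F b * F a ^ q).
  symmetry; under eq_bigr do rewrite big_split /=.
  rewrite big_split /=; congr (_ + _).
    by rewrite big_distrl; apply: eq_bigr => a _; rewrite big_distrr.
  by rewrite big_distrr; apply: eq_bigr => a _ /=; rewrite big_distrl.
by apply: leq_sum => a _; apply: leq_sum => b _; apply: pair_le.
Qed.

Lemma power_mean_sum q :
  (\sum_(a <- r) F a) ^ q * size r <= size r ^ q * \sum_(a <- r) F a ^ q.
Proof.
elim: q => [|q IH].
  by rewrite !expn0 !mul1n; under eq_bigr do rewrite expn0; rewrite sum1_size.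
rewrite expnS -mulnA (leq_trans (leq_mul (leqnn _) IH)) //.
by rewrite mulnCA expnS [size r * _]mulnC -mulnA leq_mul // chebyshev_sum.
Qed.

End PowerMean.

Section HomCounts.
Variable V : finType.
Local Notation n := #|V|.

(* A weight [W] on sequences stands for a (weighted) ordered hypergraph; [link W a]
   is the weight of the sequences [s] such that [x :: s] is an edge for every [x]
   in [a]. *)
Definition link (W : seq V -> nat) (a : seq V) : seq V -> nat :=
  fun s => \prod_(x <- a) W (x :: s).

(* The number of homomorphisms from the complete [j]-partite [j]-graph with parts of
   size [t] into [W] (whose edges have size [j]), choosing one part at a time. *)
Fixpoint hom_count (t j : nat) (W : seq V -> nat) : nat :=
  if j is j'.+1 then \sum_(a <- allseqs V t) hom_count t j' (link W a) else W [::].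

(* The same count, restricted to injective maps avoiding the vertices of [B]. *)
Fixpoint inj_hom_count (t j : nat) (B : seq V) (W : seq V -> nat) : nat :=
  if j is j'.+1 then
    \sum_(a <- allseqs V t | uniq (B ++ a)) inj_hom_count t j' (B ++ a) (link W a)
  else W [::].

(* Erdős' bound: the homomorphism density of the complete partite graph is at least
   the [t ^ j]-th power of the edge density, by [j] applications of the power mean
   inequality. *)
Lemma hom_count_ge t j (W : seq V -> nat) : 0 < n ->
  (\sum_(s <- allseqs V j) W s) ^ (t ^ j) * n ^ (j * t)
    <= n ^ (j * t ^ j) * hom_count t j W.
Proof.
move=> n_gt0; elim: j W => [|j IH] W; first by rewrite /= big_seq1 !expn0 !mul1n muln1.
set m := t ^ j; set Z := \sum_(s <- allseqs V j.+1) W s.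
set A := \sum_(a <- allseqs V t) \sum_(s <- allseqs V j) link W a s.
set Q := \sum_(a <- allseqs V t) (\sum_(s <- allseqs V j) link W a s) ^ m.
set h := hom_count t j.+1 W.
have ZA : Z ^ t * n ^ j <= n ^ (j * t) * A.
  have := power_mean_sum (allseqs V j) (fun s => \sum_x W (x :: s)) t.
  rewrite size_allseqs -expnM.
  have -> : \sum_(s <- allseqs V j) \sum_x W (x :: s) = Z.
    by rewrite /Z big_allseqsS exchange_big.
  suff -> : \sum_(s <- allseqs V j) (\sum_x W (x :: s)) ^ t = A by [].
  rewrite /A exchange_big /=; apply: eq_bigr => s _.
  by rewrite -sum_allseqs_prod.
have AQ : A ^ m * n ^ t <= n ^ (t * m) * Q.
  have := power_mean_sum (allseqs V t)
            (fun a => \sum_(s <- allseqs V j) link W a s) m.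
  by rewrite size_allseqs -expnM.
have Qh : Q * n ^ (j * t) <= n ^ (j * m) * h.
  rewrite /Q /h /= big_distrl big_distrr /=; apply: leq_sum => a _; exact: IH.
have ZAm : Z ^ (t * m) * n ^ (j * m) <= n ^ (j * t * m) * A ^ m.
  by rewrite (expnM Z) (expnM n j) [n ^ (j * t * m)]expnM -!expnMn; apply: leq_expn2r.
have n_exp_gt0 e : 0 < n ^ e by rewrite expn_gt0 n_gt0.
rewrite -(leq_pmul2l (n_exp_gt0 (j * m))) expnS -/m.
have -> : n ^ (j * m) * (Z ^ (t * m) * n ^ (j.+1 * t))
    = (Z ^ (t * m) * n ^ (j * m)) * n ^ t * n ^ (j * t).
  by rewrite mulSn expnD; ring.
have -> : n ^ (j * m) * (n ^ (j.+1 * (t * m)) * h)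
    = n ^ (j * t * m) * n ^ (t * m) * (n ^ (j * m) * h).
  by rewrite !mulSn !expnD (mulnA j t m); ring.
apply: (leq_trans (leq_mul (leq_mul ZAm (leqnn _)) (leqnn _))).
rewrite -!mulnA leq_mul // mulnA (leq_trans (leq_mul AQ (leqnn _))) //.
by rewrite -mulnA leq_mul.
Qed.

Lemma link_le1 (W : seq V -> nat) a :
  (forall s, W s <= 1) -> forall s, link W a s <= 1.
Proof.
move=> W_le1 s; rewrite /link; elim: a => [|x a IH]; first by rewrite big_nil.
by rewrite big_cons (leq_trans (leq_mul (W_le1 _) IH)).
Qed.

Lemma hom_count_le t j (W : seq V -> nat) :
  (forall s, W s <= 1) -> hom_count t j W <= n ^ (j * t).
Proof.
elim: j W => [|j IH] W W_le1 /=; first by rewrite W_le1.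
rewrite mulSn expnD -(size_allseqs V t) -sum_nat_const_seq.
by apply: leq_sum => a _; apply: IH; apply: link_le1.
Qed.

Lemma count_nonuniq_cat m (B : seq V) : uniq B ->
  (\sum_(s <- allseqs V m) (~~ uniq (B ++ s) : nat)) * n <= m * (size B + m) * n ^ m.
Proof.
elim: m B => [|m IH] B uB; first by rewrite /= big_seq1 cats0 uB.
rewrite big_allseqsS big_distrl /=.
have step x : (\sum_(s <- allseqs V m) (~~ uniq (B ++ x :: s) : nat)) * n
    <= (x \in B) * n ^ m.+1 + m * (size B + m).+1 * n ^ m.
  case xB: (x \in B) => /=.
    rewrite mul1n expnSr (leq_trans _ (leq_addr _ _)) // leq_mul2r.
    apply/orP; right; rewrite -(size_allseqs V m) -sum1_size.
    by apply: leq_sum => s _; case: (~~ _).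
  rewrite mul0n add0n.
  have := IH (rcons B x); rewrite rcons_uniq xB uB size_rcons => /(_ isT).
  by under [X in X * _ <= _ -> _]eq_bigr do rewrite cat_rcons; rewrite addSn.
apply: leq_trans; first by apply: leq_sum => x _; exact: step.
rewrite big_split /= -big_distrl /= sum_nat_const cardT -cardE.
have cardB : \sum_x (x \in B : nat) <= size B.
  rewrite (leq_trans _ (card_size B)) // -sum1_card big_mkcond /=.
  by rewrite [X in _ <= X]big_mkcond /=; apply: leq_sum => x _; case: (x \in B).
rewrite (leq_trans (leq_add (leq_mul cardB (leqnn _)) (leqnn _))) //.
by rewrite expnS; set b := size B; set N := n ^ m; nia.
Qed.

Lemma count_uniq_cons_ge (v : V) l :
  2 * (l * (1 + l)) <= n ->
  n ^ l <= 2 * \sum_(s <- allseqs V l) (uniq (v :: s) : nat).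
Proof.
move=> n_ge; have n_gt0 : 0 < n by apply/card_gt0P; exists v.
have nonuniq := count_nonuniq_cat l (isT : uniq [:: v]).
have split : \sum_(s <- allseqs V l) (uniq (v :: s) : nat)
   + \sum_(s <- allseqs V l) (~~ uniq ([:: v] ++ s) : nat) = n ^ l.
  rewrite -big_split /= -(size_allseqs V l) -sum1_size; apply: eq_bigr => s _.
  by case: (_ && _).
move: nonuniq split; rewrite [size [:: v]]/=.
set G := \sum_(s <- allseqs V l) (uniq (v :: s) : nat).
set B := \sum_(s <- allseqs V l) (~~ uniq ([:: v] ++ s) : nat).
set N := n ^ l => nonuniq split.
suff : 2 * B * n <= N * n by rewrite leq_pmul2r // => ?; lia.
by rewrite -mulnA (leq_trans (leq_mul (leqnn 2) nonuniq)) // mulnA mulnC leq_mul.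
Qed.

(* The induction step for non-injective homomorphisms: at most [t (|B| + t) n ^ (t - 1)]
   choices of the next part [a] repeat a vertex of [B ++ a]. *)
Lemma sum_le_uniq_cat t (B : seq V) (X Y : seq V -> nat) K M : uniq B ->
  (forall a, size a = t -> uniq (B ++ a) -> X a * n <= Y a * n + K * M) ->
  (forall a, X a <= M) ->
  (\sum_(a <- allseqs V t) X a) * n
    <= (\sum_(a <- allseqs V t | uniq (B ++ a)) Y a) * n
       + (K + t * (size B + t)) * n ^ t * M.
Proof.
move=> uB XY X_le; rewrite big_distrl (bigID (fun a => uniq (B ++ a))) /=.
have uniq_part : \sum_(a <- allseqs V t | uniq (B ++ a)) X a * n
    <= (\sum_(a <- allseqs V t | uniq (B ++ a)) Y a) * n + n ^ t * (K * M).
  rewrite big_distrl /= -(size_allseqs V t) -sum_nat_const_seq.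
  apply: (@leq_trans (\sum_(a <- allseqs V t | uniq (B ++ a)) (Y a * n + K * M))).
    rewrite big_seq_cond [X in _ <= X]big_seq_cond.
    by apply: leq_sum => a /andP[/size_mem_allseqs a_t u]; apply: XY.
  rewrite big_split /= leq_add2l [X in _ <= X]big_mkcond /= big_mkcond /=.
  by apply: leq_sum => a _; case: (uniq _).
have nonuniq_part : \sum_(a <- allseqs V t | ~~ uniq (B ++ a)) X a * n
    <= t * (size B + t) * n ^ t * M.
  apply: (@leq_trans ((\sum_(a <- allseqs V t) (~~ uniq (B ++ a) : nat)) * n * M)).
    rewrite -!big_distrl /= big_mkcond /= mulnAC leq_mul // big_distrl /=.
    by apply: leq_sum => a _; case: (uniq (B ++ a)) => //=; rewrite mul1n.
  by rewrite leq_mul // count_nonuniq_cat.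
rewrite (leq_trans (leq_add uniq_part nonuniq_part)) // -addnA leq_add2l.
by set N := n ^ t; nia.
Qed.

Fixpoint noninj_bound (t j b : nat) : nat :=
  if j is j'.+1 then noninj_bound t j' (b + t) + t * (b + t) else 0.

Lemma hom_count_le_inj t j (B : seq V) (W : seq V -> nat) :
  uniq B -> (forall s, W s <= 1) ->
  hom_count t j W * n
    <= inj_hom_count t j B W * n + noninj_bound t j (size B) * n ^ (j * t).
Proof.
elim: j B W => [|j IH] B W uB W_le1; first by rewrite /= addn0.
rewrite /= mulSn expnD mulnA.
apply: sum_le_uniq_cat => // [a a_t u|a].
  by have := IH _ (link W a) u (link_le1 a W_le1); rewrite size_cat a_t.
exact: hom_count_le (link_le1 a W_le1).
Qed.

End HomCounts.

Section Embedding.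
Variable V : finType.

(* [supported W [:: a_1; ...; a_j]]: every transversal of the parts [a_i] is an edge
   of [W]. *)
Fixpoint supported (W : seq V -> nat) (ps : seq (seq V)) : bool :=
  if ps is a :: ps' then supported (link W a) ps' else 0 < W [::].

Lemma inj_hom_count_gt0 t j (B : seq V) (W : seq V -> nat) :
  uniq B -> 0 < inj_hom_count t j B W ->
  exists ps : seq (seq V), [/\ size ps = j, all (fun a => size a == t) ps,
    uniq (B ++ flatten ps) & supported W ps].
Proof.
elim: j B W => [|j IH] B W uB /=; first by exists [::]; rewrite cats0 uB.
rewrite lt0n sum_nat_seq_neq0 => /hasP[a a_t /andP[uBa]]; rewrite -lt0n => hom_gt0.
have [ps [ps_j ps_t uBps Wps]] := IH _ _ uBa hom_gt0.
exists (a :: ps); rewrite /= ps_j ps_t (size_mem_allseqs a_t) eqxx catA uBps.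
by split.
Qed.

Lemma supported_transversal (W : seq V -> nat) ps xs :
  supported W ps -> all2 (fun x a => x \in a) xs ps -> 0 < W xs.
Proof.
elim: ps W xs => [|a ps IH] W [|x xs] //= Wps /andP[xa xs_ps].
by have /gt0_prodn_seq := IH _ _ Wps xs_ps; apply.
Qed.

Lemma all2_mem_nth (x0 : V) xs (ps : seq (seq V)) : size xs = size ps ->
  (forall i, i < size ps -> nth x0 xs i \in nth [::] ps i) ->
  all2 (fun x a => x \in a) xs ps.
Proof.
elim: ps xs => [|a ps IH] [|x xs] //= [size_xs] xs_ps.
by rewrite (xs_ps 0 isT) IH // => i; apply: (xs_ps i.+1).
Qed.

Lemma uniq_flatten_nth (ps : seq (seq V)) i :
  uniq (flatten ps) -> uniq (nth [::] ps i).
Proof.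
elim: ps i => [|a ps IH] [|i] //=; rewrite cat_uniq => /and3P[ua _ ups] //.
exact: IH.
Qed.

Lemma uniq_flatten_nth_inj (ps : seq (seq V)) i i' x :
  uniq (flatten ps) -> i < size ps -> i' < size ps ->
  x \in nth [::] ps i -> x \in nth [::] ps i' -> i = i'.
Proof.
elim: ps i i' => [|a ps IH] [|i] [|i'] //=;
  rewrite cat_uniq => /and3P[ua /hasPn a_ps ups].
- move=> _ lt_i' xa x_ps; suff /a_ps : x \in flatten ps by rewrite xa.
  by apply/flattenP; exists (nth [::] ps i'); rewrite ?mem_nth.
- move=> lt_i _ x_ps xa; suff /a_ps : x \in flatten ps by rewrite xa.
  by apply/flattenP; exists (nth [::] ps i); rewrite ?mem_nth.
- by move=> lt_i lt_i' x_i x_i'; rewrite (IH i i').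
Qed.

Lemma class_transversal (W : finType) (j : nat) (c : W -> 'I_j) (e : {set W}) :
  (forall i : 'I_j, #|[set u in e | c u == i]| = 1%N) ->
  exists g : 'I_j -> W,
    [/\ forall i, g i \in e, forall i, c (g i) = i & {in e, forall u, g (c u) = u}].
Proof.
move=> one_per_class.
have pick_class i : {w | w \in e & c w = i}.
  case: (pickP [pred u in [set u in e | c u == i]]) => [u|none] /=.
    by rewrite inE => /andP[ue /eqP cu]; exists u.
  by exfalso; have := one_per_class i; rewrite (eq_card0 none).
exists (fun i => s2val (pick_class i)); split=> [i|i|u ue].
- by case: (pick_class i).
- by case: (pick_class i).
have /cards1P[w Ew] : #|[set u0 in e | c u0 == c u]| == 1%N by rewrite one_per_class.
have : u \in [set u0 in e | c u0 == c u] by rewrite inE ue eqxx.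
have : s2val (pick_class (c u)) \in [set u0 in e | c u0 == c u].
  by case: (pick_class (c u)) => w' w'e cw' /=; rewrite inE w'e cw' eqxx.
by rewrite Ew !inE => /eqP -> /eqP ->.
Qed.

(* A [k]-partite [F] with classes [c] maps into the rows [ps] of a blow-up, class [i]
   going injectively into row [i]; [w0] is sent to the head [v] of the first row. *)
Lemma in_copy_of_rows (W : finType) (j : nat) (EF : {set {set W}})
    (EH : {set {set V}}) (c : W -> 'I_j.+1) (w0 : W) (v : V) (ps : seq (seq V)) :
  (forall e, e \in EF -> forall i : 'I_j.+1, #|[set u in e | c u == i]| = 1%N) ->
  c w0 = ord0 -> size ps = j.+1 -> all (fun a => size a == #|W|) ps ->
  uniq (flatten ps) -> nth v (nth [::] ps 0) 0 = v ->
  (forall xs, all2 (fun x a => x \in a) xs ps -> [set y in xs] \in EH) ->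
  in_copy EF EH v.
Proof.
move=> c_edge c_w0 ps_j ps_W u_ps v_head ps_edges.
have W_gt0 : 0 < #|W| by apply/card_gt0P; exists w0.
pose r (w : W) : 'I_#|W| := tperm (enum_rank w0) (Ordinal W_gt0) (enum_rank w).
have r_inj : injective r by move=> a b /perm_inj /enum_rank_inj.
have size_row i : i < j.+1 -> size (nth [::] ps i) = #|W|.
  by move=> lt_ij; apply/eqP; apply: (allP ps_W); apply: mem_nth; rewrite ps_j.
pose f w := nth v (nth [::] ps (c w)) (r w).
have f_row w : f w \in nth [::] ps (c w) by apply: mem_nth; rewrite size_row.
exists f; split.
- move=> w1 w2 f12.
  have c12 : c w1 = c w2.
    apply: val_inj; apply: (uniq_flatten_nth_inj (x := f w1) u_ps);
      rewrite ?ps_j ?ltn_ord ?f_row // f12; exact: f_row.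
  move: f12; rewrite /f c12 => /eqP; rewrite nth_uniq ?size_row ?uniq_flatten_nth //.
  by move=> /eqP/val_inj/r_inj.
- move=> e eE; have [g [g_e c_g g_c]] := class_transversal (c_edge e eE).
  pose xs := [seq f (g (inord i)) | i <- iota 0 j.+1].
  suff -> : f @: e = [set y in xs].
    apply: ps_edges; apply: (all2_mem_nth (x0 := v)).
      by rewrite size_map size_iota ps_j.
    move=> i; rewrite ps_j => lt_ij.
    rewrite (nth_map 0) ?size_iota // nth_iota // add0n.
    by have := f_row (g (inord i)); rewrite c_g inordK.
  apply/setP => y; rewrite inE; apply/imsetP/mapP.
    move=> [u ue ->]; exists (nat_of_ord (c u)); first by rewrite mem_iota /=.
    by rewrite inord_val g_c.
  by move=> [i _ ->]; exists (g (inord i)).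
- have -> : v = f w0 by rewrite /f c_w0 /r tpermL.
  exact: codom_f.
Qed.

End Embedding.

Section RootedCounts.
Variables (V : finType) (W : seq V -> nat) (v : V) (t l : nat).
Local Notation n := #|V|.

(* Homomorphisms of the complete [l.+1]-partite graph with parts of size [t.+1]
   whose first part is [v :: U]. *)
Definition rooted_hom_count : nat :=
  \sum_(U <- allseqs V t) hom_count t.+1 l (link W (v :: U)).

Definition rooted_inj_hom_count : nat :=
  \sum_(U <- allseqs V t | uniq (v :: U))
    inj_hom_count t.+1 l (v :: U) (link W (v :: U)).

Lemma sum_rooted_link :
  \sum_(U <- allseqs V t) \sum_(s <- allseqs V l) link W (v :: U) s
  = \sum_(s <- allseqs V l) W (v :: s) * (\sum_x W (x :: s)) ^ t.
Proof.
rewrite exchange_big /=; apply: eq_bigr => s _.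
rewrite -sum_allseqs_prod big_distrr /=; apply: eq_bigr => U _.
by rewrite /link big_cons.
Qed.

Lemma rooted_hom_count_ge : 0 < n ->
  (\sum_(U <- allseqs V t) \sum_(s <- allseqs V l) link W (v :: U) s) ^ (t.+1 ^ l)
     * n ^ t * n ^ (l * t.+1)
  <= n ^ (t * t.+1 ^ l) * n ^ (l * t.+1 ^ l) * rooted_hom_count.
Proof.
move=> n_gt0.
have := power_mean_sum (allseqs V t)
   (fun U => \sum_(s <- allseqs V l) link W (v :: U) s) (t.+1 ^ l).
rewrite size_allseqs -expnM => mean.
have hom_ge : (\sum_(U <- allseqs V t)
      (\sum_(s <- allseqs V l) link W (v :: U) s) ^ (t.+1 ^ l)) * n ^ (l * t.+1)
    <= n ^ (l * t.+1 ^ l) * rooted_hom_count.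
  rewrite big_distrl big_distrr /=; apply: leq_sum => U _; exact: hom_count_ge.
by rewrite (leq_trans (leq_mul mean (leqnn _))) // -!mulnA leq_mul.
Qed.

Definition rooted_noninj_bound : nat := noninj_bound t.+1 l t.+1 + t * (1 + t).

Lemma rooted_hom_count_le_inj : (forall s, W s <= 1) ->
  rooted_hom_count * n <= rooted_inj_hom_count * n
    + rooted_noninj_bound * n ^ (t + l * t.+1).
Proof.
move=> W_le1; rewrite expnD mulnA.
apply: (@sum_le_uniq_cat _ _ [:: v]) => // [U U_t uvU|U].
  by have := hom_count_le_inj t.+1 l uvU (link_le1 (v :: U) W_le1); rewrite /= U_t.
exact: hom_count_le (link_le1 (v :: U) W_le1).
Qed.

End RootedCounts.

Section Codegree.
Variables (V : finType) (EH : {set {set V}}).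

Definition edge_ind (s : seq V) : nat := [set y in s] \in EH.

Lemma edge_ind_le1 s : edge_ind s <= 1.
Proof. by rewrite /edge_ind; case: (_ \in _). Qed.

Lemma edge_ind_uniq j s : is_kgraph j EH -> size s = j -> 0 < edge_ind s -> uniq s.
Proof.
move=> EH_unif s_j; rewrite lt0b => /EH_unif; rewrite cardsE => card_s.
by apply/card_uniqP; rewrite card_s s_j.
Qed.

Lemma sum_edge_indS (v : V) l :
  \sum_(s <- allseqs V l.+1) edge_ind (v :: s)
  = \sum_(s <- allseqs V l) \sum_x edge_ind (x :: v :: s).
Proof.
rewrite big_allseqsS exchange_big /=; apply: eq_bigr => s _; apply: eq_bigr => x _.
rewrite /edge_ind (_ : [set y in v :: x :: s] = [set y in x :: v :: s]) //.
by apply/setP => y; rewrite !inE orbCA.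
Qed.

(* An edge containing the [j]-set of [s] is [x |: s] for its remaining vertex [x]. *)
Lemma codeg_le_sum_edge_ind j s : is_kgraph j.+1 EH -> uniq s -> size s = j ->
  #|[set e in EH | [set y in s] \subset e]| <= \sum_x edge_ind (x :: s).
Proof.
move=> EH_unif us s_j; set S := [set y in s].
have -> : \sum_x edge_ind (x :: s) = #|[set x | x |: S \in EH]|.
  rewrite -sum1_card [in RHS]big_mkcond /=; apply: eq_bigr => x _; rewrite inE.
  rewrite /edge_ind (_ : [set y in x :: s] = x |: S); first by case: (_ \in _).
  by apply/setP => y; rewrite !inE.
apply: (leq_trans _ (leq_imset_card (fun x => x |: S) _)).
apply: subset_leq_card; apply/subsetP => e; rewrite inE => /andP[eEH Se].
have cardS : #|S| = j by rewrite cardsE (card_uniqP us).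
have cardE : #|e| = j.+1 by apply: EH_unif.
have /card_gt0P[x] : 0 < #|e :\: S| by rewrite cardsD (setIidPr Se) cardE cardS subSnn.
rewrite inE => /andP[xS xe].
have eE : e = x |: S.
  by apply/eqP; rewrite eq_sym eqEcard subUset sub1set xe Se /= cardsU1 xS cardE cardS.
by rewrite eE; apply: imset_f; rewrite inE -eE.
Qed.

End Codegree.

Lemma in_copy_of_rooted_inj_hom (W V : finType) (l : nat) (EF : {set {set W}})
    (EH : {set {set V}}) (c : W -> 'I_l.+2) (w0 : W) (v : V) :
  (forall e, e \in EF -> forall i : 'I_l.+2, #|[set u in e | c u == i]| = 1%N) ->
  c w0 = ord0 -> 0 < rooted_inj_hom_count (edge_ind EH) v #|W|.-1 l.+1 ->
  in_copy EF EH v.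
Proof.
move=> c_edge c_w0; have W_gt0 : 0 < #|W| by apply/card_gt0P; exists w0.
rewrite lt0n sum_nat_seq_neq0 => /hasP[U U_t /andP[uvU]]; rewrite -lt0n.
move=> /(inj_hom_count_gt0 uvU) [ps [ps_l ps_t u_ps ps_edges]].
apply: (@in_copy_of_rows _ _ l.+1 EF EH c w0 v ((v :: U) :: ps)) => //.
- by rewrite /= ps_l.
- by move: ps_t; rewrite /= (size_mem_allseqs U_t) prednK // eqxx.
- move=> xs /(@supported_transversal _ (edge_ind EH) ((v :: U) :: ps) xs ps_edges).
  by rewrite lt0b.
Qed.

Local Open Scope ring_scope.

Definition rooted_density_lb (R : realType) (alpha : R) (t l : nat) : R :=
  (alpha ^+ t.+1 / 2) ^+ (t.+1 ^ l.+1).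

Lemma rooted_density_lb_gt0 (R : realType) (alpha : R) t l :
  0 < alpha -> 0 < rooted_density_lb alpha t l.
Proof. by move=> alpha_gt0; rewrite exprn_gt0 ?divr_gt0 ?exprn_gt0. Qed.

Section VertexDensity.
Variables (R : realType) (V : finType) (EH : {set {set V}}) (l t : nat) (alpha : R).
Variable v : V.
Hypotheses (EH_unif : is_kgraph l.+2 EH) (EH_codeg : codeg_ge l.+2 EH alpha).
Hypothesis alpha_gt0 : 0 < alpha.
Hypothesis n_ge : (2 * (l * (1 + l)) <= #|V|)%N.
Local Notation nR := (#|V|%:R : R).
Local Notation e := (edge_ind EH).

Let card_gt0 : (0 < #|V|)%N. Proof. by apply/card_gt0P; exists v. Qed.
Let n_gt0 : 0 < nR. Proof. by rewrite ltr0n. Qed.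

Lemma sum_edge_ind_ge_codeg s : uniq s -> size s = l.+1 ->
  alpha * nR <= (\sum_x e (x :: s))%:R.
Proof.
move=> us s_l; have cardS : #|[set y in s]| = l.+1 by rewrite cardsE (card_uniqP us).
by apply: (le_trans (EH_codeg cardS)); rewrite ler_nat (codeg_le_sum_edge_ind EH_unif).
Qed.

Lemma degree_ge : alpha * nR ^+ l.+1 <= 2 * (\sum_(s <- allseqs V l.+1) e (v :: s))%:R.
Proof.
set G := (\sum_(s <- allseqs V l) (uniq (v :: s) : nat))%N.
have deg_ge : alpha * nR * G%:R <= (\sum_(s <- allseqs V l.+1) e (v :: s))%:R.
  rewrite sum_edge_indS natr_sum /G natr_sum mulr_sumr.
  rewrite big_seq [X in _ <= X]big_seq; apply: ler_sum => s /size_mem_allseqs s_l.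
  case uvs: (uniq (v :: s)); last by rewrite mulr0 ler0n.
  by rewrite mulr1; apply: sum_edge_ind_ge_codeg; rewrite //= s_l.
have G_ge : nR ^+ l <= 2 * G%:R.
  by rewrite -natrX -natrM ler_nat count_uniq_cons_ge.
apply: (@le_trans _ _ (alpha * nR * (2 * G%:R))).
  by rewrite exprS mulrA ler_wpM2l // mulr_ge0 // ltW.
by rewrite mulrCA ler_wpM2l.
Qed.

Lemma rooted_link_sum_ge : alpha ^+ t.+1 / 2 * nR ^+ (t + l.+1)
  <= (\sum_(U <- allseqs V t) \sum_(s <- allseqs V l.+1) link e (v :: U) s)%:R.
Proof.
have anR_ge0 : 0 <= alpha * nR by rewrite mulr_ge0 // ltW.
rewrite sum_rooted_link natr_sum.
apply: (@le_trans _ _ ((alpha * nR) ^+ t * (\sum_(s <- allseqs V l.+1) e (v :: s))%:R)).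
  have -> : alpha ^+ t.+1 / 2 * nR ^+ (t + l.+1)
      = (alpha * nR) ^+ t * (alpha * nR ^+ l.+1 / 2) by rewrite exprMn exprS exprD; ring.
  by rewrite ler_wpM2l ?exprn_ge0 // ler_pdivrMr // [_ * 2]mulrC degree_ge.
rewrite natr_sum mulr_sumr big_seq [X in _ <= X]big_seq; apply: ler_sum => s s_l.
have := edge_ind_le1 EH (v :: s).
case vs: (e (v :: s)) => [|[|]] // _; first by rewrite mul0n mulr0.
have uvs : uniq (v :: s).
  by apply: (edge_ind_uniq EH_unif); rewrite /= ?(size_mem_allseqs s_l) // vs.
rewrite mul1n mulr1 natrX; apply: lerXn2r; rewrite ?nnegrE ?ler0n //.
by case/andP: uvs => _ us; rewrite sum_edge_ind_ge_codeg ?(size_mem_allseqs s_l).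
Qed.

Lemma rooted_hom_count_ge_density :
  rooted_density_lb alpha t l * nR ^+ (t + l.+1 * t.+1)
    <= (rooted_hom_count e v t l.+1)%:R.
Proof.
set m := (t.+1 ^ l.+1)%N.
have := rooted_hom_count_ge e v t l.+1 card_gt0.
rewrite -(ler_nat R) !natrM !natrX -/m => count_ge.
have nR_gt0 : 0 < nR ^+ (t * m) * nR ^+ (l.+1 * m) by rewrite mulr_gt0 // exprn_gt0.
rewrite -(ler_pM2r nR_gt0) /rooted_density_lb -/m.
have -> : (alpha ^+ t.+1 / 2) ^+ m * nR ^+ (t + l.+1 * t.+1)
    * (nR ^+ (t * m) * nR ^+ (l.+1 * m))
  = (alpha ^+ t.+1 / 2 * nR ^+ (t + l.+1)) ^+ m * nR ^+ t * nR ^+ (l.+1 * t.+1).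
  by rewrite [in RHS]exprMn -[in RHS]exprM mulnDl !exprD; ring.
rewrite [_%:R * _]mulrC; apply: le_trans count_ge.
rewrite !ler_wpM2r ?exprn_ge0 ?ler0n //.
apply: lerXn2r; last exact: rooted_link_sum_ge.
  by rewrite nnegrE mulr_ge0 ?divr_ge0 ?exprn_ge0 ?ler0n ?ltW.
by rewrite nnegrE ler0n.
Qed.

Lemma rooted_inj_hom_count_gt0 :
  (rooted_noninj_bound t l.+1)%:R / rooted_density_lb alpha t l < nR ->
  (0 < rooted_inj_hom_count e v t l.+1)%N.
Proof.
rewrite ltr_pdivrMr ?rooted_density_lb_gt0 // => n_large; rewrite lt0n; apply/negP => /eqP inj0.
have := rooted_hom_count_le_inj v t l.+1 (edge_ind_le1 EH).
rewrite inj0 mul0n add0n -(ler_nat R) !natrM natrX => count_le.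
have := rooted_hom_count_ge_density.
rewrite -(ler_pM2r n_gt0) => /le_trans/(_ count_le).
rewrite mulrAC ler_pM2r ?exprn_gt0 // mulrC => /(lt_le_trans n_large).
by rewrite ltxx.
Qed.

End VertexDensity.

Theorem mainTheorem12 (R : realType) (k : nat) (hk : (2 <= k)%N)
    (W : finType) (EF : {set {set W}}) :
  is_kgraph k EF -> kpartite k EF -> in_COVER R k EF.
Proof.
move=> _ [c [c_surj c_edge]] p alpha _ /andP[alpha_gt0 _].
case: k hk c c_surj c_edge => [|[|l]] // _ c c_surj c_edge.
have [w0 c_w0] := c_surj ord0.
pose t := #|W|.-1.
pose bound := (rooted_noninj_bound t l.+1)%:R / rooted_density_lb alpha t l.
pose N := Num.Def.archi_bound bound.
have N_gt : bound < N%:R.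
  by apply: archi_boundP; rewrite divr_ge0 ?ler0n ?ltW ?rooted_density_lb_gt0.
exists (2 * (l * (1 + l)) + N)%N, 1 => // V EH EH_unif _ EH_codeg n_ge v.
apply: (in_copy_of_rooted_inj_hom c_edge c_w0).
apply: (rooted_inj_hom_count_gt0 v EH_unif EH_codeg) => //.
  by rewrite (leq_trans _ n_ge) ?leq_addr.
by rewrite (lt_le_trans N_gt) // ler_nat (leq_trans _ n_ge) ?leq_addl.
Qed.
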